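(* Let $G$ be a (nonempty) subgraph of $Q_n$ with average degree $d$. For each vertex $v$ of $G$, let $|L_G(v)|$ denote the maximum length of an increasing geodesic in $G$ ending at $v$. Then $$\sum_{v\in V(G)} |L_G(v)| \ge d\,|V(G)|.$$
   Context: The hypercube $Q_n$ has vertex set $\{0,1\}^n$, two vertices adjacent iff they differ in exactly one coordinate; the direction of an edge is that coordinate in $\{1,\dots,n\}$. A path $P=x_1x_2\ldots x_l$ in $Q_n$ is an increasing geodesic if the directions of the edges $x_ix_{i+1}$ strictly increase with $i$; it ends at $x_l$. The single-vertex path $x_1$ is an increasing geodesic of length $0$ ending at $x_1$. Length means number of edges. The average degree of $G$ is $2|E(G)|/|V(G)|$. *)

From mathcomp Require Import all_boot all_order all_algebra.
Set Implicit Arguments. Unset Strict Implicit. Unset Printing Implicit Defensive.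

(* Vertices of Q_n: functions 'I_n -> bool (coordinate i+1 of the paper is index i). *)
Definition cube (n : nat) := {ffun 'I_n -> bool}.

Definition flip n (x : cube n) (i : 'I_n) : cube n :=
  [ffun j => if j == i then ~~ x j else x j].

Definition subgraph_of_cube n (V : {set cube n}) (E : {set {set cube n}}) : Prop :=
  forall e, e \in E ->
    exists x : cube n, exists i : 'I_n,
      [/\ e = [set x; flip x i], x \in V & flip x i \in V].

(* The increasing geodesic starting at x with direction sequence ds visits
   x, flip x ds_1, flip (flip x ds_1) ds_2, ... *)
Definition incr_geod n (V : {set cube n}) (E : {set {set cube n}})
    (x : cube n) (ds : seq 'I_n) : bool :=
  [&& x \in V,
      sorted ltn (map val ds) &
      path (fun u w => [set u; w] \in E) x (scanl (@flip n) x ds)].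

Definition geod_end n (x : cube n) (ds : seq 'I_n) : cube n :=
  last x (scanl (@flip n) x ds).

(* There is an increasing geodesic in G of length k (= number of edges) ending at v. *)
Definition has_geod_len n V E (v : cube n) (k : nat) : bool :=
  [exists x : cube n, exists ds : k.-tuple 'I_n,
     incr_geod V E x ds && (geod_end x ds == v)].

(* |L_G(v)| : maximum length of an increasing geodesic in G ending at v
   (lengths are at most n since directions strictly increase in 'I_n). *)
Definition Lmax n V E (v : cube n) : nat :=
  \max_(k < n.+1 | has_geod_len V E v k) k.

Definition avg_degree n (V : {set cube n}) (E : {set {set cube n}}) : rat :=
  (2 * #|E|)%:R / #|V|%:R.

From mathcomp Require Import all_boot all_order all_algebra.
From mathcomp Require Import zify.
Set Implicit Arguments. Unset Strict Implicit. Unset Printing Implicit Defensive.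

(* Let L_K(v) be the length of a longest increasing geodesic of G ending at v
   that uses only directions < K, so L_0 = 0 and L_n = L.  If {v, v + e_K} is
   an edge of G, a geodesic realising L_K(v) continues to v + e_K, and one
   realising L_K(v + e_K) continues to v; hence
     L_{K+1}(v) + L_{K+1}(v + e_K) >= L_K(v) + L_K(v + e_K) + 2.
   Summing over v, each edge of direction K is counted twice on the right, so
   sum_v L_{K+1}(v) exceeds sum_v L_K(v) by at least twice the number of edges
   of direction K.  Hence sum_v L(v) >= 2|E(G)| = d |V(G)|. *)

Section Flip.
Variable n : nat.
Implicit Types (x : cube n) (i : 'I_n).

Lemma flipK i : involutive ((@flip n)^~ i).
Proof. by move=> x; apply/ffunP=> j; rewrite !ffunE; case: (j == i); rewrite ?negbK. Qed.

Lemma flip_inj i : injective ((@flip n)^~ i).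
Proof. exact: inv_inj (flipK i). Qed.

Lemma flip_neq x i : flip x i != x.
Proof. by apply/eqP=> /ffunP /(_ i); rewrite ffunE eqxx; case: (x i). Qed.

Lemma flip_dir_inj x : injective (flip x).
Proof.
by move=> i j /ffunP /(_ i); rewrite !ffunE eqxx; case: eqP => // _; case: (x i).
Qed.

Lemma geod_endE x ds : geod_end x ds = foldl (@flip n) x ds.
Proof. by elim: ds x => [|d ds IH] x //; exact: IH. Qed.

Lemma geod_end_rcons x ds i : geod_end x (rcons ds i) = flip (geod_end x ds) i.
Proof. by rewrite !geod_endE foldl_rcons. Qed.

End Flip.

Lemma sum_nat_mem (T : finType) (A : {pred T}) : \sum_(i : T) (i \in A : nat) = #|A|.
Proof. by rewrite -sum1_card [in RHS]big_mkcond; apply: eq_bigr => i _; case: (i \in A). Qed.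

Lemma size_sorted_ltn_bounded (s : seq nat) K :
  sorted ltn s -> all (fun d => d < K) s -> size s <= K.
Proof.
move=> s_sorted /allP s_lt; rewrite -(size_iota 0 K); apply: uniq_leq_size.
  by apply: sorted_uniq s_sorted; [exact: ltn_trans | exact: ltnn].
by move=> d /s_lt; rewrite mem_iota.
Qed.

Lemma sorted_ltn_rcons (s : seq nat) K :
  sorted ltn s -> all (fun d => d < K) s -> sorted ltn (rcons s K).
Proof.
case: s => // d s s_path /allP s_lt.
by rewrite /= rcons_path [path _ _ _]s_path; apply: s_lt; rewrite mem_last.
Qed.

Section Subgraph.
Variables (n : nat) (V : {set cube n}) (E : {set {set cube n}}).
Hypothesis subG : subgraph_of_cube V E.
Implicit Types (u v x : cube n) (i : 'I_n).

Lemma edge_endpoints u w : [set u; w] \in E -> u \in V /\ w \in V.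
Proof.
move=> /subG [x [i [e_def xV fV]]].
have: u \in [set u; w] by rewrite !inE eqxx.
have: w \in [set u; w] by rewrite !inE eqxx orbT.
by rewrite e_def !inE => /orP [] /eqP -> /orP [] /eqP ->.
Qed.

Definition edge_at i v : bool := [set v; flip v i] \in E.

Lemma edge_at_flip i v : edge_at i (flip v i) = edge_at i v.
Proof. by rewrite /edge_at flipK setUC. Qed.

Lemma card_edges_at v : #|[set e in E | v \in e]| = \sum_(i : 'I_n) edge_at i v.
Proof.
have -> : [set e in E | v \in e] = [set [set v; flip v i] | i in edge_at^~ v].
  apply/setP => e; rewrite !inE; apply/andP/imsetP => [[eE ve] | [i iE ->]].
    have [x [i [e_def _ _]]] := subG eE.
    move: ve; rewrite e_def !inE => /orP [] /eqP ->; exists i.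
    - by rewrite unfold_in /edge_at -e_def.
    - by [].
    - by rewrite unfold_in edge_at_flip /edge_at -e_def.
    - by rewrite flipK setUC.
  by split; rewrite ?set21.
rewrite (@sum_nat_mem _ (edge_at^~ v)) card_in_imset // => i j _ _ eq_ij.
have: flip v i \in [set v; flip v j] by rewrite -eq_ij set22.
rewrite !inE => /orP [/eqP fv | /eqP /flip_dir_inj //].
by have := flip_neq v i; rewrite fv eqxx.
Qed.

Lemma handshake : 2 * #|E| = \sum_v \sum_(i : 'I_n) edge_at i v.
Proof.
have -> : 2 * #|E| = \sum_(e in E) \sum_v (v \in e : nat).
  rewrite mulnC -sum_nat_const; apply: eq_bigr => e /subG [x [i [-> _ _]]].
  by rewrite sum_nat_mem cards2 eq_sym flip_neq.
rewrite exchange_big /=; apply: eq_bigr => v _.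
rewrite -card_edges_at -sum_nat_mem big_mkcond.
by apply: eq_bigr => e _; rewrite inE; case: (e \in E).
Qed.

Definition has_geod_lt (K : nat) v (k : nat) : bool :=
  [exists x, exists ds : k.-tuple 'I_n,
     [&& incr_geod V E x ds, geod_end x ds == v & all (fun d : 'I_n => d < K) ds]].

(* [Lmax_lt K v] is L_K(v); off [V] it is set to [0] so that it is bounded by [Lmax]. *)
Definition Lmax_lt (K : nat) v : nat :=
  if v \in V then \max_(k < n.+1 | has_geod_lt K v k) k else 0.

Lemma leq_Lmax_lt K v (k : 'I_n.+1) : v \in V -> has_geod_lt K v k -> k <= Lmax_lt K v.
Proof.
move=> vV gk; rewrite /Lmax_lt vV.
exact: (@leq_bigmax_cond _ (fun k : 'I_n.+1 => has_geod_lt K v k) (fun k => nat_of_ord k) _ gk).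
Qed.

Lemma Lmax_lt_witness K v : v \in V -> has_geod_lt K v (Lmax_lt K v).
Proof.
move=> vV; have g0 : has_geod_lt K v (@ord0 n).
  apply/existsP; exists v; apply/existsP; exists [tuple].
  by rewrite /incr_geod /geod_end /= vV eqxx.
rewrite /Lmax_lt vV.
rewrite (@bigmax_eq_arg _ ord0 (fun k : 'I_n.+1 => has_geod_lt K v k) (fun k => nat_of_ord k) g0).
by case: arg_maxnP.
Qed.

Lemma Lmax_lt_le_Lmax K v : Lmax_lt K v <= Lmax V E v.
Proof.
rewrite /Lmax_lt; case: ifP => // _.
apply/bigmax_leqP => k /existsP [x /existsP [ds /and3P [g_ds end_ds _]]].
by apply: leq_bigmax_cond; apply/existsP; exists x; apply/existsP; exists ds; rewrite g_ds.
Qed.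

Lemma Lmax_lt_mono K v : Lmax_lt K v <= Lmax_lt K.+1 v.
Proof.
rewrite /Lmax_lt; case: ifP => // _.
apply/bigmax_leqP => k /existsP [x /existsP [ds /and3P [g_ds end_ds lt_ds]]].
apply: leq_bigmax_cond; apply/existsP; exists x; apply/existsP; exists ds.
by rewrite g_ds end_ds; apply: sub_all lt_ds => d /ltnW.
Qed.

Lemma incr_geod_rcons x ds i :
  incr_geod V E x ds -> all (fun d : 'I_n => d < i) ds ->
  [set geod_end x ds; flip (geod_end x ds) i] \in E -> incr_geod V E x (rcons ds i).
Proof.
move=> /and3P [xV ds_sorted ds_path] lt_ds e_in.
rewrite /incr_geod xV map_rcons sorted_ltn_rcons ?all_map //=.
rewrite scanl_rcons rcons_path ds_path /=.
by rewrite -/(geod_end x ds) -geod_endE geod_end_rcons.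
Qed.

Lemma Lmax_lt_extend i u : edge_at i u -> (Lmax_lt i u).+1 <= Lmax_lt i.+1 (flip u i).
Proof.
move=> u_edge; have [uV fV] := edge_endpoints u_edge.
have /existsP [x /existsP [ds /and3P [g_ds /eqP end_ds lt_ds]]] := Lmax_lt_witness i uV.
have ds_size : (Lmax_lt i u).+1 < n.+1.
  have /and3P [_ ds_sorted _] := g_ds.
  have := size_sorted_ltn_bounded (K := i) ds_sorted.
  rewrite size_map size_tuple all_map => /(_ lt_ds) le_i.
  exact: leq_ltn_trans le_i (ltn_ord i).
apply: (leq_Lmax_lt (k := Ordinal ds_size)) => //.
apply/existsP; exists x; apply/existsP; exists [tuple of rcons ds i].
rewrite incr_geod_rcons ?end_ds // geod_end_rcons end_ds eqxx all_rcons ltnSn /=.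
by apply: sub_all lt_ds => d /ltnW.
Qed.

Lemma Lmax_lt_pair i v :
  Lmax_lt i v + Lmax_lt i (flip v i) + (edge_at i v + edge_at i v) <=
  Lmax_lt i.+1 v + Lmax_lt i.+1 (flip v i).
Proof.
have := Lmax_lt_mono i v; have := Lmax_lt_mono i (flip v i).
case v_edge: (edge_at i v) => /=; last by lia.
have := Lmax_lt_extend v_edge.
have := @Lmax_lt_extend i (flip v i); rewrite edge_at_flip flipK => /(_ v_edge).
lia.
Qed.

Lemma sum_Lmax_lt_step i :
  \sum_v Lmax_lt i v + \sum_v edge_at i v <= \sum_v Lmax_lt i.+1 v.
Proof.
have flip_sum K : \sum_v Lmax_lt K (flip v i) = \sum_v Lmax_lt K v.
  by rewrite [RHS](reindex_inj (@flip_inj n i)).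
have : \sum_v (Lmax_lt i v + Lmax_lt i (flip v i) + (edge_at i v + edge_at i v)) <=
       \sum_v (Lmax_lt i.+1 v + Lmax_lt i.+1 (flip v i)).
  by apply: leq_sum => v _; exact: Lmax_lt_pair.
rewrite !big_split /= !flip_sum.
by rewrite addnACA !addnn leq_double.
Qed.

Lemma sum_edges_le_sum_Lmax_lt K : K <= n ->
  \sum_v \sum_(i : 'I_n | i < K) edge_at i v <= \sum_v Lmax_lt K v.
Proof.
elim: K => [|K IH] Kn.
  by rewrite big1 // => v _; rewrite big1.
pose i := Ordinal Kn.
have split_last v : \sum_(j : 'I_n | j < K.+1) edge_at j v =
                    edge_at i v + \sum_(j : 'I_n | j < K) edge_at j v.
  rewrite (bigD1 i) //=; congr (_ + _); apply: eq_bigl => j.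
  by rewrite ltnS ltn_neqAle -val_eqE andbC.
rewrite (eq_bigr _ (fun v _ => split_last v)) big_split /=.
by rewrite addnC; apply: leq_trans (sum_Lmax_lt_step i); rewrite leq_add2r IH // ltnW.
Qed.

End Subgraph.

Local Open Scope ring_scope.
Import Order.TTheory GRing.Theory Num.Theory.

Theorem theorem4 (n : nat) (V : {set cube n}) (E : {set {set cube n}}) :
  subgraph_of_cube V E -> V != set0 ->
  avg_degree V E * #|V|%:R <= \sum_(v in V) (Lmax V E v)%:R :> rat.
Proof.
move=> subG V_neq0; have V_gt0 : (0 < #|V|)%N by rewrite card_gt0.
rewrite /avg_degree divfK ?pnatr_eq0 -?lt0n // -natr_sum ler_nat (handshake subG).
have := sum_edges_le_sum_Lmax_lt subG (leqnn n).
under eq_bigr do under eq_bigl do rewrite ltn_ord.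
move=> /leq_trans; apply; rewrite [X in (_ <= X)%N]big_mkcond /=.
apply: leq_sum => v _; case: ifP => vV; first exact: Lmax_lt_le_Lmax.
by rewrite /Lmax_lt vV.
Qed.
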